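(* Fix integers $q\ge 1$ and $k\ge 3$, and let $G(q,k)$ be the graph on vertex set $\{v_0,v_1,\ldots,v_{kq}\}$ in which, with all indices taken modulo $kq+1$, the neighbourhood of $v_i$ is $$\{v_{i-1},v_{i+1}\}\cup\{v_{i+kj+m} : m=2,3,\ldots,k-1,\ j=0,1,\ldots,q-1\}.$$ Then $G(q,k)$ is $(k+1)$-vertex-critical.
   Context: $\chi(G)$ denotes the chromatic number of $G$. A graph $G$ is $t$-vertex-critical if $\chi(G)=t$ and $\chi(G-v)<t$ for every vertex $v$ of $G$. *)

From mathcomp Require Import all_boot.
Set Implicit Arguments. Unset Strict Implicit. Unset Printing Implicit Defensive.

Definition colorable (T : finType) (e : rel T) (A : {set T}) (n : nat) : bool :=
  [exists c : {ffun T -> 'I_n},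
     [forall x in A, forall y in A, (x != y) && e x y ==> (c x != c y)]].

Lemma colorable_exists (T : finType) (e : rel T) (A : {set T}) :
  exists n, colorable e A n.
Proof.
exists #|T|; apply/existsP; exists [ffun x => enum_rank x].
apply/forallP => x; apply/implyP => _; apply/forallP => y; apply/implyP => _.
apply/implyP => /andP [nxy _]; rewrite !ffunE.
by apply: contra nxy => /eqP /enum_rank_inj ->.
Qed.

Definition chi (T : finType) (e : rel T) (A : {set T}) : nat :=
  ex_minn (colorable_exists e A).

Definition vertex_critical (T : finType) (e : rel T) (t : nat) : Prop :=
  chi e [set: T] = t /\ forall v : T, chi e ([set: T] :\ v) < t.

(* The graph G(q,k) on vertices v_0..v_{kq}, represented by 'I_(k*q).+1;
   with d = (j - i) mod (kq+1), v_j is a neighbour of v_i iff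
   d = 1, d = -1 (= kq), or d = k*j' + m with 0 <= j' < q, 2 <= m <= k-1. *)
Definition Gqk (q k : nat) : rel 'I_(k * q).+1 :=
  fun x y =>
    let d := (y + (k * q).+1 - x) %% (k * q).+1 in
    [|| d == 1, d == k * q
      | [exists j : 'I_q, exists m : 'I_k, (2 <= m) && (d == k * j + m)]].
Arguments Gqk q k : clear implicits.

From mathcomp Require Import all_boot zmodp.
From mathcomp Require Import zify.

Set Implicit Arguments.
Unset Strict Implicit.
Unset Printing Implicit Defensive.

(** Any [k] cyclically consecutive vertices of [G(q,k)] form a clique, so a
   [k]-colouring gives [v_(i+k)] the colour of [v_i]; after [q] such steps the
   neighbour [v_(i+kq) = v_(i-1)] of [v_i] gets the colour of [v_i].
   Conversely, deleting [v] leaves the path [v+1, ..., v+kq]; colouring it by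
   position modulo [k] is proper, because two vertices at distance [kj] or
   [kq+1-kj] ([0 < j < q]) are never adjacent.  Giving [v] a new colour then
   [(k+1)]-colours [G(q,k)]. *)

Lemma colorableP (T : finType) (e : rel T) (A : {set T}) n :
  reflect (exists c : T -> 'I_n, {in A &, forall x y, x != y -> e x y -> c x != c y})
          (colorable e A n).
Proof.
apply: (iffP existsP) => [[c /forall_inP Hc] | [c Hc]].
  exists c => x y Ax Ay nxy exy.
  by have /forall_inP /(_ y Ay) := Hc x Ax; rewrite nxy exy.
exists [ffun x => c x]; apply/forall_inP => x Ax; apply/forall_inP => y Ay.
by apply/implyP => /andP [nxy exy]; rewrite !ffunE; apply: Hc.
Qed.

Section Chromatic.

Variables (T : finType) (e : rel T).

Lemma colorable_widen (A : {set T}) m n :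
  m <= n -> colorable e A m -> colorable e A n.
Proof.
move=> le_mn /colorableP [c Hc]; apply/colorableP.
exists (fun x => widen_ord le_mn (c x)) => x y Ax Ay nxy exy.
by apply: contra (Hc x y Ax Ay nxy exy) => /eqP [/val_inj ->].
Qed.

Lemma colorable_setD1 (A : {set T}) v n :
  colorable e (A :\ v) n -> colorable e A n.+1.
Proof.
move=> /colorableP [c Hc]; apply/colorableP.
pose c' x := if x == v then ord_max else widen_ord (leqnSn n) (c x).
exists c' => x y Ax Ay nxy exy; rewrite /c'.
have neq_max (i : 'I_n) : widen_ord (leqnSn n) i != ord_max.
  by rewrite -val_eqE /= ltn_eqF.
case: (eqVneq x v) => [xv | xv]; case: (eqVneq y v) => [yv | yv].
- by rewrite xv yv eqxx in nxy.
- by rewrite eq_sym neq_max.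
- exact: neq_max.
have := Hc x y; rewrite !in_setD1 xv yv => /(_ Ax Ay nxy exy).
by apply: contra => /eqP [/val_inj ->].
Qed.

Lemma chi_colorable (A : {set T}) : colorable e A (chi e A).
Proof. by rewrite /chi; case: ex_minnP. Qed.

Lemma chi_le (A : {set T}) n : colorable e A n -> chi e A <= n.
Proof. by rewrite /chi; case: ex_minnP => m _; apply. Qed.

Lemma chi_gt (A : {set T}) n : ~~ colorable e A n -> n < chi e A.
Proof.
by apply: contraR; rewrite -leqNgt => /colorable_widen; apply; apply: chi_colorable.
Qed.

End Chromatic.

Section ConsecutiveCliques.

Variables (N k : nat) (e : rel 'I_N.+1) (c : 'I_N.+1 -> 'I_k).
Hypothesis consecutive_adj : forall a d, 0 < d < k -> e (inZp a) (inZp (a + d)).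
Hypothesis c_proper : forall x y, e x y -> c x != c y.

Lemma consecutive_color_periodic a : c (inZp (a + k)) = c (inZp a).
Proof.
pose f (i : 'I_k) := c (inZp (a + i)).
have f_inj : injective f.
  suff lt_neq (i j : 'I_k) : i < j -> f i != f j.
    move=> i j; case: (ltngtP i j) => [/lt_neq/eqP // | /lt_neq/eqP fji fij|].
      by rewrite fij in fji.
    by move=> /val_inj.
  move=> lt_ij; have d_ok : 0 < j - i < k by have := ltn_ord j; lia.
  by have /c_proper := consecutive_adj (a + i) d_ok; rewrite -addnA subnKC // ltnW.
have [g fK gK] := injF_bij f_inj.
set i := g (c (inZp (a + k))).
have fg : f i = c (inZp (a + k)) by rewrite gK.
have [i0 | i_gt0] := posnP i; first by rewrite -fg /f i0 addn0.
have lt_ik := ltn_ord i.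
have d_ok : 0 < k - i < k by lia.
have /c_proper := consecutive_adj (a + i) d_ok.
by rewrite -addnA subnKC ?(ltnW lt_ik) // -fg /f eqxx.
Qed.

Lemma consecutive_color_periodicM t a : c (inZp (a + k * t)) = c (inZp a).
Proof.
elim: t a => [|t IHt] a; first by rewrite muln0 addn0.
by rewrite mulnS addnA IHt consecutive_color_periodic.
Qed.

End ConsecutiveCliques.

Definition Gqk_diff (q k d : nat) : bool :=
  [|| d == 1, d == k * q
    | [exists j : 'I_q, exists m : 'I_k, (2 <= m) && (d == k * j + m)]].

Section Gqk.

Variables q k : nat.
Hypotheses (q_gt0 : 0 < q) (k_gt2 : 2 < k).
Let k_gt0 : 0 < k := ltnW (ltnW k_gt2).

Local Notation n := (k * q).+1.

Lemma GqkE (x y : 'I_n) : Gqk q k x y = Gqk_diff q k ((y + n - x) %% n).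
Proof. by []. Qed.

Lemma Gqk_inZp a d : Gqk q k (inZp a) (inZp (a + d)) = Gqk_diff q k (d %% n).
Proof.
rewrite GqkE; congr Gqk_diff; apply/eqP => /=.
have a_lt_n : a %% n < n by rewrite ltn_pmod.
rewrite -(eqn_modDr (a %% n)) subnK; last exact: leq_trans (ltnW a_lt_n) (leq_addl _ _).
by rewrite modnDr modn_mod modnDmr addnC.
Qed.

Lemma Gqk_irrefl (x : 'I_n) : Gqk q k x x = false.
Proof.
have kq_gt0 : 0 < k * q by rewrite muln_gt0 k_gt0.
rewrite GqkE addKn modnn; apply/negP; rewrite /Gqk_diff /=.
by case/orP => [/eqP | /existsP [j /existsP [m /andP [m_ge2 /eqP]]]]; lia.
Qed.

Lemma Gqk_diff_consecutive d : 0 < d < k -> Gqk_diff q k d.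
Proof.
move=> /andP [d_gt0 d_lt_k]; rewrite /Gqk_diff; case: (eqVneq d 1) => //= d_neq1.
apply/orP; right; apply/existsP; exists (Ordinal q_gt0).
apply/existsP; exists (Ordinal d_lt_k).
by rewrite /= muln0 add0n eqxx andbT; lia.
Qed.

Lemma Gqk_diff_far j r : 0 < j < q -> r <= 1 -> ~~ Gqk_diff q k (k * j + r).
Proof.
move=> /andP [j_gt0 j_lt_q] r_le1; have le_k_kj : k <= k * j by rewrite leq_pmulr.
have lt_kj_kq : k * j.+1 <= k * q by rewrite leq_mul2l j_lt_q orbT.
rewrite /Gqk_diff mulnS in lt_kj_kq *; apply/norP; split; first lia.
apply/norP; split; first lia.
apply/negP => /existsP [j' /existsP [m /andP [m_ge2 /eqP eq_jr]]].
have := congr1 (modn^~ k) eq_jr.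
by rewrite !(mulnC k) !modnMDl !modn_small //; lia.
Qed.

Lemma Gqk_far b j : 0 < j < q ->
  ~~ Gqk q k (inZp b) (inZp (b + k * j)) && ~~ Gqk q k (inZp (b + k * j)) (inZp b).
Proof.
move=> j_range; have /andP [j_gt0 j_lt_q] := j_range.
have lt_kj_kq : k * j < k * q by rewrite ltn_pmul2l.
have kqj : k * j + k * (q - j) = k * q by rewrite -mulnDr subnKC // ltnW.
apply/andP; split.
  rewrite Gqk_inZp modn_small; last exact: ltn_trans lt_kj_kq (ltnSn _).
  by rewrite -[k * j]addn0 Gqk_diff_far.
have -> : inZp b = inZp (b + k * j + (k * (q - j) + 1)) :> 'I_n.
  by apply: val_inj; rewrite /= -!addnA (addnA (k * j)) kqj addn1 modnDr.
have lt_qj_q : q - j < q by rewrite ltn_subrL j_gt0 q_gt0.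
rewrite Gqk_inZp modn_small; last by rewrite addn1 ltnS ltn_pmul2l.
by rewrite Gqk_diff_far // subn_gt0 j_lt_q.
Qed.

(* The position of [x] on the path [v+1, ..., v+kq] left by deleting [v]. *)
Definition offset (v x : 'I_n) : nat := (x + (n - v.+1)) %% n.

Lemma inZp_offset (v x : 'I_n) : inZp (v.+1 + offset v x) = x.
Proof.
apply: val_inj; rewrite /= /offset modnDmr.
by rewrite (_ : _ + _ = x + n) ?modnDr ?modn_small //; have := ltn_ord v; lia.
Qed.

Lemma offset_lt {v x : 'I_n} : x != v -> offset v x < k * q.
Proof.
move=> xv; have : offset v x < n by rewrite ltn_pmod.
rewrite ltnS leq_eqVlt => /orP [/eqP off_kq | //].
case/negP: xv; rewrite -(inZp_offset v x) off_kq.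
by apply/eqP/val_inj; rewrite /= addSnnS modnDr modn_small.
Qed.

Lemma offset_congr_far {v x y : 'I_n} : x != v -> y != v ->
  offset v x < offset v y -> offset v x = offset v y %[mod k] ->
  ~~ Gqk q k x y && ~~ Gqk q k y x.
Proof.
move=> xv yv lt_xy /eqP; rewrite eq_sym eqn_mod_dvd; last exact: ltnW lt_xy.
move=> /dvdnP [j ej].
have split_y := subnKC (ltnW lt_xy); rewrite ej mulnC in split_y.
have j_gt0 : 0 < j by move: lt_xy; rewrite -subn_gt0 ej muln_gt0 => /andP [].
have j_lt_q : j < q.
  rewrite -(ltn_pmul2l k_gt0); apply: leq_ltn_trans (offset_lt yv).
  by rewrite -split_y leq_addl.
rewrite -(inZp_offset v x) -(inZp_offset v y) -split_y addnA.
by apply: Gqk_far; rewrite j_gt0 j_lt_q.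
Qed.

Lemma Gqk_colorable_setD1 (v : 'I_n) : colorable (Gqk q k) ([set: 'I_n] :\ v) k.
Proof.
apply/colorableP; exists (fun x => Ordinal (ltn_pmod (offset v x) k_gt0)).
move=> x y; rewrite !in_setD1 => /andP [xv _] /andP [yv _] nxy exy.
apply/eqP => /(congr1 val) /= same_mod.
have [lt_xy | lt_yx | eq_xy] := ltngtP (offset v x) (offset v y).
- by have /andP [/negP] := offset_congr_far xv yv lt_xy same_mod.
- by have /andP [_ /negP] := offset_congr_far yv xv lt_yx (esym same_mod).
- by rewrite -(inZp_offset v x) -(inZp_offset v y) eq_xy eqxx in nxy.
Qed.

Lemma Gqk_not_colorable : ~~ colorable (Gqk q k) [set: 'I_n] k.
Proof.
apply/colorableP => -[c c_proper].
have Gqk_proper x y : Gqk q k x y -> c x != c y.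
  move=> exy; apply: c_proper; rewrite ?in_setT //.
  by apply: contraTneq exy => ->; rewrite Gqk_irrefl.
have consecutive a d : 0 < d < k -> Gqk q k (inZp a) (inZp (a + d)).
  move=> d_range; rewrite Gqk_inZp modn_small ?Gqk_diff_consecutive //.
  have /andP [_ d_lt_k] := d_range.
  exact: leq_trans d_lt_k (leqW (leq_pmulr k q_gt0)).
have := consecutive_color_periodicM consecutive Gqk_proper q 1.
have -> : inZp (1 + k * q) = inZp 0 :> 'I_n.
  by apply: val_inj; rewrite /= add1n modnn mod0n.
have /Gqk_proper := consecutive 0 1 (ltnW k_gt2).
by rewrite add0n => /eqP; apply.
Qed.

End Gqk.

Theorem lemma2p6 (q k : nat) (hq : 1 <= q) (hk : 3 <= k) :
  vertex_critical (Gqk q k) k.+1.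
Proof.
have colorable_G_minus_v := Gqk_colorable_setD1 hq hk.
split=> [|v]; last by rewrite ltnS; apply: chi_le.
apply/eqP; rewrite eqn_leq chi_gt ?Gqk_not_colorable // andbT.
exact/chi_le/(colorable_setD1 (v := ord0)).
Qed.
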